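(* Let $(G,\Omega)$ be an ample transitive $\ell$-permutation group whose root system $T$ has no minimal element. Let $\Delta\in T$ and $h\in Q_\Delta$. (a) Let $\Delta'\in T$ with $\Delta'\subsetneq\Delta$ and $\Delta'h\neq\Delta'$, and let $1\neq g\in\mathrm{rst}(\Delta')$. Then (i) $[h^{-1},h^g]\neq1$ (in particular $X_h\neq\{1\}$); and (ii) if $f\in G$ and $[[h^{-1},h^g],f]=1$ then $\Delta'f=\Delta'$; in particular every $f$ in the centralizer $\mathrm C_G(X_h)$ satisfies $\Delta'f=\Delta'$. (b) If $\beta\in\mathrm{supp}(h)$ and $f\in G$, then either $\beta f=\beta$ or $[[h^{-1},h^g],f]\neq1$ for some $g\in\mathrm{rst}(\Delta)$.
   Context: An $\ell$-permutation group $(G,\Omega)$: a totally ordered set $\Omega$ with a subgroup $G$ of $\mathrm{Aut}(\Omega,\leqslant)$ (right action) closed under pointwise max and min; transitive if $G$ is transitive on $\Omega$. $\mathrm{supp}(g)=\{\alpha:\alpha g\neq\alpha\}$, $g^f=f^{-1}gf$, $[a,b]=a^{-1}b^{-1}ab$. A convex congruence is a $G$-invariant equivalence relation with convex classes; these are totally ordered by inclusion. For $\alpha\neq\beta$, $V(\alpha,\beta)$ is the intersection of all convex congruences in which $\alpha,\beta$ lie in the same class. $T$ is the set of all classes of the congruences $V(\alpha,\beta)$ ($\alpha\ne\beta$), partially ordered by inclusion; for $\Delta\in T$, $\kappa(\Delta)$ is the congruence $V(\alpha,\beta)$ having $\Delta$ as a class. $\mathrm{rst}(\Delta)=\{g:\mathrm{supp}(g)\subseteq\Delta\}$.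 $Q_\Delta=\{h\in\mathrm{rst}(\Delta):\exists\alpha\in\Delta,\ V(\alpha,\alpha h)=\kappa(\Delta)\}$; $(G,\Omega)$ is ample if $Q_\Delta\neq\emptyset$ for all $\Delta\in T$. For $h\in Q_\Delta$, $X_h=\{[h^{-1},h^g]:g\in G\}$. *)

Set Implicit Arguments.

(* A bijection of Omega, packaged with its inverse. Right action: alpha g = pf g alpha. *)
Record perm (Omega : Type) := Perm {
  pf : Omega -> Omega;
  pinv : Omega -> Omega;
  pf_pinv : forall x, pf (pinv x) = x;
  pinv_pf : forall x, pinv (pf x) = x
}.

Section LPerm.
Variable Omega : Type.

Definition act (alpha : Omega) (g : perm Omega) : Omega := pf g alpha.

Definition pone : perm Omega :=
  @Perm Omega (fun x => x) (fun x => x) (fun _ => eq_refl) (fun _ => eq_refl).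

(* product gh : first g, then h  (alpha (g h) = (alpha g) h) *)
Definition pmul (g h : perm Omega) : perm Omega.
Proof.
  refine (@Perm Omega (fun x => pf h (pf g x)) (fun x => pinv g (pinv h x)) _ _).
  - intro x. rewrite pf_pinv. apply pf_pinv.
  - intro x. rewrite pinv_pf. apply pinv_pf.
Defined.

Definition pinvg (g : perm Omega) : perm Omega :=
  @Perm Omega (pinv g) (pf g) (pinv_pf g) (pf_pinv g).

Definition conj (g f : perm Omega) : perm Omega := pmul (pinvg f) (pmul g f).

Definition comm (a b : perm Omega) : perm Omega :=
  pmul (pmul (pinvg a) (pinvg b)) (pmul a b).

Definition is_id (g : perm Omega) : Prop := forall alpha, act alpha g = alpha.

Variable le : Omega -> Omega -> Prop.

Definition total_order : Prop :=
  (forall x, le x x) /\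
  (forall x y, le x y -> le y x -> x = y) /\
  (forall x y z, le x y -> le y z -> le x z) /\
  (forall x y, le x y \/ le y x).

Variable G : perm Omega -> Prop.

Definition is_lperm_group : Prop :=
  total_order /\
  (forall g, G g -> forall x y, le x y <-> le (act x g) (act y g)) /\
  G pone /\
  (forall g h, G g -> G h -> G (pmul g h)) /\
  (forall g, G g -> G (pinvg g)) /\
  (* closed under pointwise max *)
  (forall g h, G g -> G h -> exists k, G k /\ forall alpha,
      (le (act alpha g) (act alpha h) -> act alpha k = act alpha h) /\
      (le (act alpha h) (act alpha g) -> act alpha k = act alpha g)) /\
  (* closed under pointwise min *)
  (forall g h, G g -> G h -> exists k, G k /\ forall alpha,
      (le (act alpha g) (act alpha h) -> act alpha k = act alpha g) /\
      (le (act alpha h) (act alpha g) -> act alpha k = act alpha h)).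

Definition transitive : Prop :=
  forall alpha beta, exists g, G g /\ act alpha g = beta.

Definition convex_congruence (E : Omega -> Omega -> Prop) : Prop :=
  (forall x, E x x) /\ (forall x y, E x y -> E y x) /\
  (forall x y z, E x y -> E y z -> E x z) /\
  (forall x y g, G g -> E x y -> E (act x g) (act y g)) /\
  (forall x y z, E x y -> le x z -> le z y -> E x z).

Definition V (alpha beta : Omega) : Omega -> Omega -> Prop :=
  fun x y => forall E, convex_congruence E -> E alpha beta -> E x y.

Definition is_class_of (E : Omega -> Omega -> Prop) (Delta : Omega -> Prop) : Prop :=
  exists gamma, forall x, Delta x <-> E gamma x.

Definition inT (Delta : Omega -> Prop) : Prop :=
  exists alpha beta, alpha <> beta /\ is_class_of (V alpha beta) Delta.

Definition subset (A B : Omega -> Prop) : Prop := forall x, A x -> B x.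
Definition psubset (A B : Omega -> Prop) : Prop := subset A B /\ exists x, B x /\ ~ A x.

Definition is_kappa (Delta : Omega -> Prop) (E : Omega -> Omega -> Prop) : Prop :=
  exists a b, a <> b /\ (forall x y, E x y <-> V a b x y) /\ is_class_of E Delta.

Definition rst (Delta : Omega -> Prop) (g : perm Omega) : Prop :=
  G g /\ forall alpha, act alpha g <> alpha -> Delta alpha.

Definition Q (Delta : Omega -> Prop) (h : perm Omega) : Prop :=
  rst Delta h /\ exists alpha, Delta alpha /\ is_kappa Delta (V alpha (act alpha h)).

Definition ample : Prop := forall Delta, inT Delta -> exists h, Q Delta h.

Definition T_no_minimal : Prop :=
  forall Delta, inT Delta -> exists Delta', inT Delta' /\ psubset Delta' Delta.

Definition set_fixed (Delta : Omega -> Prop) (f : perm Omega) : Prop :=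
  forall x, (exists alpha, Delta alpha /\ act alpha f = x) <-> Delta x.

End LPerm.

From Stdlib Require Import Classical.

(* Let x be moved by g, where g is supported in the class D of a convex
   congruence and D h <> D.  The commutator c = [h^-1, h^g] acts as g^2 on D, as
   a conjugate of g^-1 on D h and on D h^-1, and trivially elsewhere.  These
   three classes are ordered (D in the middle) and c moves a point in each of
   them.  Anything commuting with c permutes its support preserving the order
   of classes, so it fixes the top and the bottom class, hence also D.  For
   (b), having no minimal element in T lets us shrink to a class around beta
   containing neither beta h nor beta f; ampleness provides a nontrivial g
   supported there, and (a) applies. *)

Lemma pf_inj {O : Type} (k : perm O) x y : pf k x = pf k y -> x = y.
Proof. intro H. rewrite <- (pinv_pf k x), <- (pinv_pf k y), H. reflexivity. Qed.

Lemma pinv_inj {O : Type} (k : perm O) x y : pinv k x = pinv k y -> x = y.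
Proof. intro H. rewrite <- (pf_pinv k x), <- (pf_pinv k y), H. reflexivity. Qed.

Lemma pf_fix_of_pinv_fix {O : Type} (k : perm O) x : pinv k x = x -> pf k x = x.
Proof. intro H. rewrite <- H at 1. apply pf_pinv. Qed.

Lemma commute_of_comm_id {O : Type} (c f : perm O) :
  is_id (comm c f) -> forall z, pf f (pf c z) = pf c (pf f z).
Proof.
  intros H z. specialize (H (pf c (pf f z))). unfold act in H. cbn in H.
  rewrite !pinv_pf in H. exact H.
Qed.

Lemma set_fixed_act {O : Type} (D : O -> Prop) f x : set_fixed D f -> D x -> D (act x f).
Proof. intros Hf Hx. apply Hf. exists x. split; [exact Hx | reflexivity]. Qed.

Section Support.
Context {O : Type}.
Variables (D : O -> Prop) (g : perm O).
Hypothesis HgD : forall x, pf g x <> x -> D x.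

Lemma supp_fix x : ~ D x -> pf g x = x.
Proof. intro Hx. apply NNPP. intro H. exact (Hx (HgD x H)). Qed.

Lemma supp_stable x : D x -> D (pf g x).
Proof.
  intro Hx. apply NNPP. intro H.
  pose proof (pf_inj g _ _ (supp_fix _ H)) as Hgx. rewrite Hgx in H. contradiction.
Qed.

Lemma supp_fix_inv x : ~ D x -> pinv g x = x.
Proof.
  intro Hx. destruct (classic (D (pinv g x))) as [H | H].
  - apply supp_stable in H. rewrite pf_pinv in H. contradiction.
  - pose proof (supp_fix _ H) as Hfix. rewrite pf_pinv in Hfix. congruence.
Qed.

Lemma supp_stable_inv x : D x -> D (pinv g x).
Proof.
  intro Hx. apply NNPP. intro H.
  pose proof (supp_fix _ H) as Hfix. rewrite pf_pinv in Hfix. rewrite <- Hfix in H.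
  contradiction.
Qed.

End Support.

Section ShiftCommutator.
Context {O : Type}.
Variables (D : O -> Prop) (g h : perm O).
Hypothesis HgD : forall x, pf g x <> x -> D x.
Hypothesis Hshift : forall z, D z -> ~ D (pf h z).
Hypothesis Hshift2 : forall z, D z -> ~ D (pf h (pf h z)).

Let c := comm (pinvg h) (conj h g).

Lemma comm_conj_pf x :
  pf c x = pf g (pf h (pinv g (pinv h (pf g (pinv h (pinv g (pf h x))))))).
Proof. reflexivity. Qed.

Lemma shift_inv z : D z -> ~ D (pinv h z).
Proof. intros Hz H. apply (Hshift _ H). rewrite pf_pinv. exact Hz. Qed.

Lemma shift2_inv z : D z -> ~ D (pinv h (pinv h z)).
Proof. intros Hz H. apply (Hshift2 _ H). rewrite !pf_pinv. exact Hz. Qed.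

Lemma comm_supp y : pf c y <> y -> D y \/ D (pf h y) \/ D (pinv h y).
Proof.
  intro Hy. apply NNPP. intro Hn. apply Hy. rewrite comm_conj_pf.
  rewrite (supp_fix_inv D g HgD (pf h y)), (pinv_pf h) by tauto.
  rewrite (supp_fix D g HgD y) by tauto.
  rewrite (supp_fix_inv D g HgD (pinv h y)), (pf_pinv h) by tauto.
  apply (supp_fix D g HgD); tauto.
Qed.

Lemma comm_on_class x : D x -> pf c x = pf g (pf g x).
Proof.
  intro Hx. rewrite comm_conj_pf.
  rewrite (supp_fix_inv D g HgD (pf h x)), (pinv_pf h) by (apply Hshift, Hx).
  rewrite (supp_fix_inv D g HgD (pinv h (pf g x))), (pf_pinv h)
    by (apply shift_inv, (supp_stable D g HgD), Hx).
  reflexivity.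
Qed.

Lemma comm_moves_shift x : D x -> pf g x <> x -> pf c (pf h x) <> pf h x.
Proof.
  intros Hx Hgx. rewrite comm_conj_pf.
  rewrite (supp_fix_inv D g HgD (pf h (pf h x))), (pinv_pf h) by (apply Hshift2, Hx).
  rewrite (supp_fix D g HgD (pf h x)), (pinv_pf h) by (apply Hshift, Hx).
  rewrite (supp_fix D g HgD (pf h (pinv g x)))
    by (apply Hshift, (supp_stable_inv D g HgD), Hx).
  intro H. apply Hgx, pf_fix_of_pinv_fix, (pf_inj h), H.
Qed.

Lemma comm_moves_shift_inv x : D x -> pf g x <> x -> pf c (pinv h x) <> pinv h x.
Proof.
  intros Hx Hgx.
  assert (Hy : D (pinv g x)) by exact (supp_stable_inv D g HgD x Hx).
  rewrite comm_conj_pf, (pf_pinv h).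
  rewrite (supp_fix D g HgD (pinv h (pinv g x))) by (apply shift_inv, Hy).
  rewrite (supp_fix_inv D g HgD (pinv h (pinv h (pinv g x)))), (pf_pinv h)
    by (apply shift2_inv, Hy).
  rewrite (supp_fix D g HgD (pinv h (pinv g x))) by (apply shift_inv, Hy).
  intro H. apply Hgx, pf_fix_of_pinv_fix, (pinv_inj h), H.
Qed.

End ShiftCommutator.

(* [le] is only required to be antisymmetric and preserved by [f], so that the
   same statement also gives the bottom class, for the reversed order. *)
Lemma centralizer_fixes_top_class {O : Type} (le E : O -> O -> Prop) (c f : perm O) b :
  (forall x y, le x y -> le y x -> x = y) ->
  (forall x y, le x y -> le (pf f x) (pf f y)) ->
  (forall x, E x x) -> (forall x y, E x y -> E y x) ->
  (forall x y, E x y -> E (pf f x) (pf f y)) ->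
  (forall z, pf f (pf c z) = pf c (pf f z)) ->
  (forall y, pf c y <> y -> E y b \/ le y b) ->
  pf c b <> b -> E b (pf f b).
Proof.
  intros Hantis Hmono Erefl Esym Emono Hcomm Htop Hb.
  assert (Hfb : pf c (pf f b) <> pf f b).
  { rewrite <- Hcomm. intro H. exact (Hb (pf_inj f _ _ H)). }
  assert (Hfb' : pf c (pinv f b) <> pinv f b).
  { intro H. apply Hb. rewrite <- (pf_pinv f b) at 1 2. rewrite <- Hcomm, H. reflexivity. }
  destruct (Htop _ Hfb) as [H1 | H1]; [exact (Esym _ _ H1) |].
  destruct (Htop _ Hfb') as [H2 | H2].
  - apply Emono in H2. rewrite pf_pinv in H2. exact H2.
  - apply Hmono in H2. rewrite pf_pinv in H2.
    rewrite (Hantis _ _ H1 H2). apply Erefl.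
Qed.

Section ClassOrder.
Context {O : Type}.
Variables (le : O -> O -> Prop) (G : perm O -> Prop) (E : O -> O -> Prop).
Hypothesis Hto : total_order le.
Hypothesis HE : convex_congruence le G E.
Hypothesis Hle_act : forall k x y, G k -> le x y -> le (pf k x) (pf k y).
Hypothesis Ginv : forall k, G k -> G (pinvg k).

Let le_antisym : forall x y, le x y -> le y x -> x = y := proj1 (proj2 Hto).
Let le_trans : forall x y z, le x y -> le y z -> le x z := proj1 (proj2 (proj2 Hto)).
Let le_total : forall x y, le x y \/ le y x := proj2 (proj2 (proj2 Hto)).
Let E_refl : forall x, E x x := proj1 HE.
Let E_sym : forall x y, E x y -> E y x := proj1 (proj2 HE).
Let E_trans : forall x y z, E x y -> E y z -> E x z := proj1 (proj2 (proj2 HE)).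
Let E_act : forall k x y, G k -> E x y -> E (pf k x) (pf k y) :=
  fun k x y => proj1 (proj2 (proj2 (proj2 HE))) x y k.
Let E_convex : forall x y z, E x y -> le x z -> le z y -> E x z :=
  proj2 (proj2 (proj2 (proj2 HE))).

Lemma E_act_inv k x y : G k -> E (pf k x) (pf k y) -> E x y.
Proof.
  intros Gk H. apply (E_act _ _ _ (Ginv k Gk)) in H. cbn in H. rewrite !pinv_pf in H.
  exact H.
Qed.

Definition class_lt x y := ~ E x y /\ le x y.

Lemma le_across_classes x y z w : E x y -> E z w -> class_lt x z -> le y w.
Proof.
  intros Hxy Hzw [Hxz Hle].
  assert (Hyz : le y z).
  { destruct (le_total y z) as [H | H]; [exact H |].
    exfalso. exact (Hxz (E_convex x y z Hxy Hle H)). }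
  destruct (le_total y w) as [H | H]; [exact H |].
  exfalso. apply Hxz.
  apply (E_trans _ y); [exact Hxy |]. apply E_sym, (E_trans _ w); [exact Hzw |].
  exact (E_convex w z y (E_sym _ _ Hzw) H Hyz).
Qed.

Lemma class_lt_compat x y z w : E x y -> E z w -> class_lt x z -> class_lt y w.
Proof.
  intros Hxy Hzw Hxz. split; [| exact (le_across_classes x y z w Hxy Hzw Hxz)].
  intro Hyw. apply (proj1 Hxz).
  apply (E_trans _ y); [exact Hxy |]. apply (E_trans _ w); [exact Hyw | exact (E_sym _ _ Hzw)].
Qed.

Lemma class_lt_trans x y z : class_lt x y -> class_lt y z -> class_lt x z.
Proof.
  intros [Hxy Hle1] [_ Hle2]. split; [| exact (le_trans _ _ _ Hle1 Hle2)].
  intro Hxz. exact (Hxy (E_convex x z y Hxz Hle1 Hle2)).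
Qed.

Lemma class_lt_act k x y : G k -> class_lt x y -> class_lt (pf k x) (pf k y).
Proof.
  intros Gk [Hxy Hle]. split; [| exact (Hle_act k x y Gk Hle)].
  intro H. exact (Hxy (E_act_inv k x y Gk H)).
Qed.

Lemma class_lt_act_inv k x y : G k -> class_lt x y -> class_lt (pinv k x) (pinv k y).
Proof. intro Gk. exact (class_lt_act (pinvg k) x y (Ginv k Gk)). Qed.

Lemma class_lt_or x y : ~ E x y -> class_lt x y \/ class_lt y x.
Proof.
  intro Hxy. destruct (le_total x y) as [H | H]; [left | right]; split; try exact H.
  - exact Hxy.
  - intro Hyx. exact (Hxy (E_sym _ _ Hyx)).
Qed.

Lemma moves_sq k x : G k -> pf k x <> x -> pf k (pf k x) <> x.
Proof.
  intros Gk Hkx Hkkx. apply Hkx.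
  destruct (le_total x (pf k x)) as [H | H];
    pose proof (Hle_act k _ _ Gk H) as H'; rewrite Hkkx in H'; auto.
Qed.

Lemma set_fixed_of_class D gamma f x :
  (forall y, D y <-> E gamma y) -> G f -> D x -> D (pf f x) -> set_fixed D f.
Proof.
  intros HD Gf Hx Hfx. rewrite HD in Hx, Hfx. intro y. rewrite HD. split.
  - intros (z & Hz & <-). rewrite HD in Hz. apply (E_trans _ (pf f x)); [exact Hfx |].
    apply E_act; [exact Gf |]. exact (E_trans _ gamma _ (E_sym _ _ Hx) Hz).
  - intro Hy. exists (pinv f y). split; [| apply pf_pinv]. apply HD.
    apply (E_trans _ x); [exact Hx |]. apply (E_act_inv f); [exact Gf |].
    rewrite pf_pinv. exact (E_trans _ gamma _ (E_sym _ _ Hfx) Hy).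
Qed.

Lemma centralizer_fixes_middle_class (c f : perm O) a x b :
  G f -> (forall z, pf f (pf c z) = pf c (pf f z)) ->
  class_lt a x -> class_lt x b ->
  pf c a <> a -> pf c x <> x -> pf c b <> b ->
  (forall y, pf c y <> y -> E y a \/ E y x \/ E y b) ->
  E x (pf f x).
Proof.
  intros Gf Hcomm Hax Hxb Ha Hx Hb Hsupp.
  assert (Hab : class_lt a b) by exact (class_lt_trans _ _ _ Hax Hxb).
  assert (Htop : E b (pf f b)).
  { apply (centralizer_fixes_top_class le E c f b le_antisym (fun y z => Hle_act f y z Gf)
      E_refl E_sym (fun y z => E_act f y z Gf) Hcomm); [| exact Hb].
    intros y Hy. destruct (Hsupp y Hy) as [H | [H | H]]; [right | right | left; exact H].
    - exact (le_across_classes a y b b (E_sym _ _ H) (E_refl b) Hab).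
    - exact (le_across_classes x y b b (E_sym _ _ H) (E_refl b) Hxb). }
  assert (Hbot : E a (pf f a)).
  { apply (centralizer_fixes_top_class (fun y z => le z y) E c f a
      (fun y z H1 H2 => le_antisym y z H2 H1) (fun y z => Hle_act f z y Gf)
      E_refl E_sym (fun y z => E_act f y z Gf) Hcomm); [| exact Ha].
    intros y Hy. destruct (Hsupp y Hy) as [H | [H | H]]; [left; exact H | right | right].
    - exact (le_across_classes a a x y (E_refl a) (E_sym _ _ H) Hax).
    - exact (le_across_classes a a b y (E_refl a) (E_sym _ _ H) Hab). }
  assert (Hfx : pf c (pf f x) <> pf f x).
  { rewrite <- Hcomm. intro H. exact (Hx (pf_inj f _ _ H)). }
  destruct (Hsupp _ Hfx) as [H | [H | H]].
  - exfalso. apply (proj1 Hax), E_sym, (E_act_inv f _ _ Gf).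
    exact (E_trans _ _ _ H Hbot).
  - exact (E_sym _ _ H).
  - exfalso. apply (proj1 Hxb), (E_act_inv f _ _ Gf).
    exact (E_trans _ _ _ H Htop).
Qed.

Section ShiftedClass.
Variables (D : O -> Prop) (gamma : O) (h : perm O).
Hypothesis HD : forall x, D x <-> E gamma x.
Hypothesis Gh : G h.
Hypothesis Hnf : ~ set_fixed D h.

Lemma class_E x y : D x -> D y -> E x y.
Proof. rewrite !HD. intros Hx Hy. exact (E_trans _ gamma _ (E_sym _ _ Hx) Hy). Qed.

Lemma class_closed x y : D x -> E x y -> D y.
Proof. rewrite !HD. intros Hx Hxy. exact (E_trans _ x _ Hx Hxy). Qed.

Lemma shift_off z : D z -> ~ D (pf h z).
Proof. intros Hz Hhz. exact (Hnf (set_fixed_of_class D gamma h z HD Gh Hz Hhz)). Qed.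

Lemma shift_not_E z : D z -> ~ E z (pf h z).
Proof. intros Hz H. exact (shift_off z Hz (class_closed _ _ Hz H)). Qed.

Lemma shift2_off z : D z -> ~ D (pf h (pf h z)).
Proof.
  intros Hz Hhhz.
  destruct (class_lt_or _ _ (shift_not_E z Hz)) as [H | H].
  - apply (proj1 (class_lt_trans _ _ _ H (class_lt_act h _ _ Gh H))).
    exact (class_E _ _ Hz Hhhz).
  - apply (proj1 (class_lt_trans _ _ _ (class_lt_act h _ _ Gh H) H)).
    exact (class_E _ _ Hhhz Hz).
Qed.

Variable g : perm O.
Hypothesis Gg : G g.
Hypothesis HgD : forall x, pf g x <> x -> D x.
Hypothesis Hng : ~ is_id g.

Let c := comm (pinvg h) (conj h g).

Lemma exists_moved : exists x, D x /\ pf g x <> x.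
Proof.
  destruct (not_all_ex_not _ _ Hng) as (x & Hx). exists x. split; [apply HgD |]; exact Hx.
Qed.

Lemma comm_shift_nontrivial : ~ is_id c.
Proof.
  destruct exists_moved as (x & Hx & Hgx). intro Hid. specialize (Hid x). unfold act, c in Hid.
  rewrite (comm_on_class D g h HgD shift_off x Hx) in Hid.
  exact (moves_sq g x Gg Hgx Hid).
Qed.

Lemma comm_shift_centralizer f : G f -> is_id (comm c f) -> set_fixed D f.
Proof.
  intros Gf Hid. destruct exists_moved as (x & Hx & Hgx).
  pose proof (commute_of_comm_id _ _ Hid) as Hcomm.
  assert (Hcx : pf c x <> x).
  { unfold c. rewrite (comm_on_class D g h HgD shift_off x Hx). exact (moves_sq g x Gg Hgx). }
  pose proof (comm_moves_shift D g h HgD shift_off shift2_off x Hx Hgx) as Hc_hx.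
  pose proof (comm_moves_shift_inv D g h HgD shift_off shift2_off x Hx Hgx) as Hc_hinvx.
  assert (Hsupp : forall y, pf c y <> y ->
            E y (pinv h x) \/ E y x \/ E y (pf h x)).
  { intros y Hy. destruct (comm_supp D g h HgD y Hy) as [H | [H | H]].
    - right; left. exact (class_E _ _ H Hx).
    - left. apply (E_act_inv h _ _ Gh). rewrite pf_pinv. exact (class_E _ _ H Hx).
    - right; right. pose proof (E_act h _ _ Gh (class_E _ _ H Hx)) as H'.
      rewrite pf_pinv in H'. exact H'. }
  apply (set_fixed_of_class D gamma f x HD Gf Hx), (class_closed x (pf f x) Hx).
  destruct (class_lt_or _ _ (shift_not_E x Hx)) as [H | H].
  - pose proof (class_lt_act_inv h _ _ Gh H) as H'. rewrite pinv_pf in H'.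
    exact (centralizer_fixes_middle_class c f _ x _ Gf Hcomm H' H Hc_hinvx Hcx Hc_hx Hsupp).
  - pose proof (class_lt_act_inv h _ _ Gh H) as H'. rewrite pinv_pf in H'.
    apply (centralizer_fixes_middle_class c f _ x _ Gf Hcomm H H' Hc_hx Hcx Hc_hinvx).
    intros y Hy. destruct (Hsupp y Hy) as [H1 | [H1 | H1]]; tauto.
Qed.

End ShiftedClass.

End ClassOrder.

Section Refinement.
Context {O : Type}.
Variables (le : O -> O -> Prop) (G : perm O -> Prop).

Lemma V_cc a b : convex_congruence le G (V le G a b).
Proof.
  split; [| split; [| split; [| split]]].
  - intros x E (Erefl & _) _. apply Erefl.
  - intros x y H E HE Hab. pose proof HE as (_ & Esym & _). exact (Esym _ _ (H E HE Hab)).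
  - intros x y z H1 H2 E HE Hab. pose proof HE as (_ & _ & Etrans & _).
    exact (Etrans _ y _ (H1 E HE Hab) (H2 E HE Hab)).
  - intros x y k Gk H E HE Hab. pose proof HE as (_ & _ & _ & Eact & _).
    exact (Eact _ _ k Gk (H E HE Hab)).
  - intros x y z H Hxz Hzy E HE Hab. pose proof HE as (_ & _ & _ & _ & Econv).
    exact (Econv _ _ _ (H E HE Hab) Hxz Hzy).
Qed.

Lemma V_ab a b : V le G a b a b.
Proof. intros E _ H. exact H. Qed.

Lemma V_min E a b : convex_congruence le G E -> E a b -> forall x y, V le G a b x y -> E x y.
Proof. intros HE Hab x y H. exact (H E HE Hab). Qed.

Lemma V_diag (Hantis : forall x y, le x y -> le y x -> x = y) a x y : V le G a a x y -> x = y.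
Proof.
  intro H. apply (H (@eq O)); [| reflexivity].
  split; [| split; [| split; [| split]]]; intros; subst.
  - reflexivity.
  - reflexivity.
  - reflexivity.
  - reflexivity.
  - apply Hantis; assumption.
Qed.

Lemma Q_nontrivial (Hantis : forall x y, le x y -> le y x -> x = y) D g :
  Q le G D g -> ~ is_id g.
Proof.
  intros (_ & alpha & _ & a & b & Hab & Hiff & _) Hid. apply Hab.
  apply (V_diag Hantis alpha). rewrite <- (Hid alpha) at 2. apply Hiff, V_ab.
Qed.

Lemma V_class_sub E D p q :
  convex_congruence le G E -> is_class_of E D -> D p -> D q ->
  forall x, V le G p q p x -> D x.
Proof.
  intros HE (gamma & HD) Hp Hq x Hx. pose proof HE as (_ & Esym & Etrans & _).
  rewrite HD in Hp, Hq |- *. apply Etrans with p; [exact Hp |].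
  apply (V_min E p q HE); [apply Etrans with gamma; [apply Esym |]; assumption | exact Hx].
Qed.

Section NoMinimal.
Hypothesis Htr : transitive G.
Hypothesis HnoMin : T_no_minimal le G.

(* A proper subclass of the class of a in V(a,b) is moved, by transitivity, to
   contain a point u; it is the class of u in some V(u,v). *)
Lemma V_finer a b : a <> b ->
  exists u v, u <> v /\ (forall x y, V le G u v x y -> V le G a b x y) /\ ~ V le G u v a b.
Proof.
  intro Hab. pose proof (V_cc a b) as (_ & Vsym & Vtrans & _).
  destruct (HnoMin (fun x => V le G a b a x))
    as (D & (a' & b' & Hab' & u & HD) & Hsub & x0 & Hx0 & Hnx0).
  { exists a, b. split; [exact Hab |]. exists a. tauto. }
  pose proof (V_cc a' b') as (Vrefl' & _ & _ & Vact' & _).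
  destruct (Htr a' u) as (k & Gk & Hk).
  assert (Huv : V le G a' b' u (act b' k)).
  { rewrite <- Hk. exact (Vact' _ _ k Gk (V_ab a' b')). }
  assert (Hu : V le G a b a u) by (apply Hsub, HD, Vrefl').
  exists u, (act b' k). split; [| split].
  - intro H. rewrite <- Hk in H. exact (Hab' (pf_inj k _ _ H)).
  - apply V_min; [apply V_cc |]. apply Vtrans with a; [exact (Vsym _ _ Hu) |].
    apply Hsub, HD, Huv.
  - intro H. apply Hnx0, HD.
    apply (V_min _ _ _ (V_cc a' b') Huv), (V_min _ _ _ (V_cc u (act b' k)) H).
    exact (Vtrans _ a _ (Vsym _ _ Hu) Hx0).
Qed.

Lemma V_separating b c1 c2 : c1 <> b -> c2 <> b ->
  exists u v, u <> v /\ (forall x y, V le G u v x y -> V le G b c1 x y) /\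
    ~ V le G u v b c1 /\ ~ V le G u v b c2.
Proof.
  intros H1 H2.
  destruct (V_finer b c1) as (u1 & v1 & Huv1 & Hsub1 & Hn1); [congruence |].
  destruct (classic (V le G u1 v1 b c2)) as [Hc2 | Hc2].
  - destruct (V_finer b c2) as (u2 & v2 & Huv2 & Hsub2 & Hn2); [congruence |].
    assert (Hsub : forall x y, V le G u2 v2 x y -> V le G u1 v1 x y).
    { intros x y H. exact (V_min _ _ _ (V_cc u1 v1) Hc2 x y (Hsub2 x y H)). }
    exists u2, v2. split; [exact Huv2 | split; [| split]].
    + intros x y H. exact (Hsub1 x y (Hsub x y H)).
    + intro H. exact (Hn1 (Hsub _ _ H)).
    + exact Hn2.
  - exists u1, v1. tauto.
Qed.

End NoMinimal.
End Refinement.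

Theorem lemma4p1 (Omega : Type) (le : Omega -> Omega -> Prop) (G : perm Omega -> Prop)
  (HG : is_lperm_group le G) (Htr : transitive G) (Hample : ample le G)
  (HnoMin : T_no_minimal le G)
  (Delta : Omega -> Prop) (HDelta : inT le G Delta)
  (h : perm Omega) (Hh : Q le G Delta h) :
  (* (a) *)
  (forall (Delta' : Omega -> Prop), inT le G Delta' -> psubset Delta' Delta ->
     ~ set_fixed Delta' h ->
     forall g : perm Omega, rst G Delta' g -> ~ is_id g ->
       (* (i) *)
       (~ is_id (comm (pinvg h) (conj h g)) /\
        (exists k, G k /\ ~ is_id (comm (pinvg h) (conj h k)))) /\
       (* (ii) *)
       (forall f, G f -> is_id (comm (comm (pinvg h) (conj h g)) f) ->
          set_fixed Delta' f) /\
       (forall f, G f ->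
          (forall k, G k -> is_id (comm (comm (pinvg h) (conj h k)) f)) ->
          set_fixed Delta' f)) /\
  (* (b) *)
  (forall beta, act beta h <> beta -> forall f, G f ->
     act beta f = beta \/
     exists g, rst G Delta g /\ ~ is_id (comm (comm (pinvg h) (conj h g)) f)).
Proof.
  pose proof HG as (Hto & Hord & _ & _ & Ginv & _).
  pose proof Hto as (_ & Hantis & _).
  assert (Hle_act : forall k x y, G k -> le x y -> le (pf k x) (pf k y))
    by (intros k x y Gk; apply (Hord k Gk)).
  destruct Hh as ((Gh & HhD) & alpha & _ & _ & _ & _ & _ & HDelta_class).
  split.
  - intros D' (a & b & _ & gamma & HD') _ Hnf g (Gg & HgD) Hng.
    pose proof (comm_shift_nontrivial le G _ Hto (V_cc le G a b) Hle_act Ginv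
      D' gamma h HD' Gh Hnf g Gg HgD Hng) as Hi.
    pose proof (comm_shift_centralizer le G _ Hto (V_cc le G a b) Hle_act Ginv
      D' gamma h HD' Gh Hnf g Gg HgD Hng) as Hii.
    split; [split; [exact Hi | exists g; split; [exact Gg | exact Hi]] | split].
    + exact Hii.
    + intros f Gf Hall. exact (Hii f Gf (Hall g Gg)).
  - intros beta Hb f Gf.
    destruct (classic (act beta f = beta)) as [Hfix | Hmove]; [left; exact Hfix | right].
    destruct (V_separating le G Htr HnoMin beta (act beta h) (act beta f) Hb Hmove)
      as (u & v & Huv & Hsub & Hsep_h & Hsep_f).
    set (D' := fun x => V le G u v beta x).
    assert (Hbeta : D' beta) by exact (proj1 (V_cc le G u v) beta).
    assert (HD'sub : forall x, D' x -> Delta x).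
    { intros x Hx. apply (V_class_sub le G _ Delta beta (act beta h) (V_cc le G _ _)
        HDelta_class (HhD beta Hb) (supp_stable Delta h HhD beta (HhD beta Hb)) x).
      exact (Hsub _ _ Hx). }
    destruct (Hample D') as (g & Hg); [exists u, v; split; [exact Huv | exists beta; tauto] |].
    pose proof Hg as ((Gg & HgD) & _).
    assert (Hmoved : ~ set_fixed D' h) by exact (fun H => Hsep_h (set_fixed_act D' h beta H Hbeta)).
    exists g. split; [split; [exact Gg | intros x Hx; exact (HD'sub x (HgD x Hx))] |].
    intro Hid. apply Hsep_f, (set_fixed_act D' f beta); [| exact Hbeta].
    exact (comm_shift_centralizer le G _ Hto (V_cc le G u v) Hle_act Ginv
      D' beta h (fun x => iff_refl _) Gh Hmoved g Gg HgD (Q_nontrivial le G Hantis D' g Hg)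
      f Gf Hid).
Qed.
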